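(* Let $G$ be a $k$-terminal directed acyclic graph with unit edge lengths and let $P\subseteq K\times K$ be a set of terminal pairs $(s,t)$ such that $t$ is reachable from $s$ in $G$. Let $\pi$ be a consistent shortest-path tie-breaking scheme in $G$, and let $H$ be the subgraph of $G$ formed by the union of the directed paths $\pi(s,t)$ over all $(s,t)\in P$. Then $H$ has at most $|P|(|P|-1)/2$ branching events.
   Context: A shortest-path tie-breaking scheme is a function $\pi$ mapping every ordered pair of vertices $(s,t)$ with $t$ reachable from $s$ to a fixed shortest directed path from $s$ to $t$ (lengths measured in number of edges); $d(\cdot,\cdot)$ denotes the directed shortest-path distance. It is consistent if for all vertices $y,x,x',y'$: whenever $x,x'$ lie on $\pi(y,y')$ with $d(y,x)<d(y,x')$, the path $\pi(x,x')$ is a subpath of $\pi(y,y')$. A branching event in a digraph is a set $\{(u_1,v),(u_2,v)\}$ of two distinct directed edges entering the same vertex $v$. *)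

From mathcomp Require Import all_boot.
Set Implicit Arguments. Unset Strict Implicit. Unset Printing Implicit Defensive.

Section Graph.
Variables (V : finType) (e : rel V).

(* A directed walk from s is represented by the list of its vertices after s;
   [path e s p] and [last s p = t] say it goes from s to t, [size p] = number of edges. *)

Definition walkn (s t : V) (n : nat) : bool :=
  [exists p : n.-tuple V, path e s p && (last s p == t)].

Lemma connect_walkn (s t : V) : connect e s t -> exists n, walkn s t n.
Proof.
move=> /connectP [p Hp Hl]; exists (size p); apply/existsP.
exists (in_tuple p); by rewrite /= Hp Hl eqxx.
Qed.

(* directed shortest-path distance (unit edge lengths); 0 if unreachable *)
Definition dist (s t : V) : nat :=
  match @idP (connect e s t) with
  | ReflectT h => ex_minn (connect_walkn h)
  | ReflectF _ => 0
  end.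

Definition dag : Prop := forall x p, path e x p -> last x p = x -> p = [::].

Definition tie_breaking (pi : V -> V -> seq V) : Prop :=
  forall s t, connect e s t ->
    [/\ path e s (pi s t), last s (pi s t) = t & size (pi s t) = dist s t].

Definition consistent (pi : V -> V -> seq V) : Prop :=
  forall y y' x x', connect e y y' ->
    x \in y :: pi y y' -> x' \in y :: pi y y' -> dist y x < dist y x' ->
    infix (x :: pi x x') (y :: pi y y').

Definition walk_edges (s : V) (p : seq V) : seq (V * V) := zip (s :: p) p.

Definition union_graph (pi : V -> V -> seq V) (P : {set V * V}) : {set V * V} :=
  [set uv | [exists st in P, uv \in walk_edges st.1 (pi st.1 st.2)]].

Definition branching_events (H : {set V * V}) : {set {set V * V}} :=
  [set B : {set V * V} | [&& B \subset H, #|B| == 2 &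
       [forall a in B, forall b in B, a.2 == b.2]]].

End Graph.

From mathcomp Require Import all_boot zify.
Set Implicit Arguments. Unset Strict Implicit. Unset Printing Implicit Defensive.

(* Charge a branching event {(u1,v), (u2,v)} of H to a pair {q1, q2} of
   demands whose paths use (u1,v) and (u2,v); q1 <> q2 since a shortest path
   visits v only once.  The charging is injective: if the paths of q1 and q2
   both pass through v <> w, acyclicity puts v before w on both of them,
   consistency makes pi(v,w) a common subpath, so both paths enter w through
   the same edge and no event at w is charged to {q1, q2}. *)

Section InfixPairs.
Variable T : eqType.

Lemma infix_of_mem_zip (x : T) (l : seq T) (p : T * T) :
  p \in zip (x :: l) l -> infix [:: p.1; p.2] (x :: l).
Proof.
elim: l x => [|y l IHl] x; first by rewrite in_nil.
rewrite [zip _ _]/= in_cons => /orP [/eqP ->|/IHl pl].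
  by rewrite /= !eqxx prefix0s.
by rewrite infix_consl pl orbT.
Qed.

Lemma infix_pair_memr (u w : T) (l : seq T) : infix [:: u; w] l -> w \in l.
Proof. by case/infixP=> a [b ->]; rewrite mem_cat !inE eqxx !orbT. Qed.

Lemma uniq_infix_pair_pred (u u' w : T) (l : seq T) :
  uniq l -> infix [:: u; w] l -> infix [:: u'; w] l -> u = u'.
Proof.
move=> Ul; suff predE u0 : infix [:: u0; w] l -> u0 = nth w l (index w l).-1.
  by move=> /predE -> /predE ->.
case/infixP=> [a [b El]]; move: Ul; rewrite El cat_uniq => /and3P [_ wa' Uuwb].
have wa : w \notin a.
  by apply: contra wa' => wa; apply/hasP; exists w; rewrite ?inE ?eqxx ?orbT.
have u0w : u0 != w by move: Uuwb => /andP []; rewrite !inE negb_or => /andP [].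
rewrite index_cat (negbTE wa) /= (negbTE u0w) eqxx addn1 /=.
by rewrite nth_cat ltnn subnn.
Qed.

Lemma infix_last_pair (v : T) (r : seq T) :
  r != [::] -> exists u, infix [:: u; last v r] (v :: r).
Proof.
case/lastP: r => [//|r w] _; exists (last v r).
rewrite last_rcons -rcons_cons (lastI v r) -!cats1 -catA.
exact: suffix_infix.
Qed.

End InfixPairs.

Section ShortestPaths.
Variables (V : finType) (e : rel V).

Lemma dist_walkn (s t : V) : connect e s t -> walkn e s t (dist e s t).
Proof.
by rewrite /dist => st; destruct (@idP (connect e s t)) => //; case: ex_minnP.
Qed.

Lemma dist_leq_walkn (s t : V) (n : nat) : walkn e s t n -> dist e s t <= n.
Proof.
move=> stn; rewrite /dist; destruct (@idP (connect e s t)) => //.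
by case: ex_minnP => m _ ->.
Qed.

Lemma walkn_path (s : V) (q : seq V) : path e s q -> walkn e s (last s q) (size q).
Proof. by move=> sq; apply/existsP; exists (in_tuple q); rewrite /= sq eqxx. Qed.

Lemma walkn_exists_path (s t : V) (n : nat) :
  walkn e s t n -> exists q, [/\ path e s q, last s q = t & size q = n].
Proof.
by case/existsP=> q /andP [sq /eqP qt]; exists q; rewrite size_tuple.
Qed.

Lemma dag_connect_antisym (x y : V) :
  dag e -> connect e x y -> connect e y x -> x = y.
Proof.
move=> acyclic /connectP [p xp ->] /connectP [q yq qx].
have /(congr1 size) : p ++ q = [::].
  by apply: (acyclic x); rewrite ?cat_path ?last_cat ?xp ?yq.
by case: p {xp yq qx}.
Qed.

Lemma path_index_connect (s x y : V) (p : seq V) :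
  path e s p -> x \in s :: p -> y \in s :: p ->
  index x (s :: p) <= index y (s :: p) -> connect e x y.
Proof.
move=> sp xp yp le_xy.
have sorted_p : sorted (connect e) (s :: p).
  by apply: sub_path sp => a b; apply: connect1.
have := sorted_leq_nth (@connect_trans _ e) (@connect0 _ e) s sorted_p.
by move=> /(_ (index x (s :: p)) (index y (s :: p))); rewrite !nth_index //; apply;
  rewrite ?inE ?index_mem.
Qed.

Variable pi : V -> V -> seq V.
Hypothesis pi_shortest : tie_breaking e pi.

Lemma dist_nth_pi (s t : V) (i : nat) : connect e s t -> i <= size (pi s t) ->
  dist e s (nth s (s :: pi s t) i) = i.
Proof.
move=> st le_i; have [sp pt size_p] := pi_shortest st.
set p := pi s t in sp pt size_p le_i *.
have -> : nth s (s :: p) i = last s (take i p).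
  rewrite (last_nth s) size_takel //.
  rewrite -[in LHS](cat_take_drop i p) -cat_cons nth_cat /= size_takel //.
  by rewrite ltnS leqnn.
move: sp; rewrite -[p in path _ _ p](cat_take_drop i p) cat_path => /andP [sp1 sp2].
apply/eqP; rewrite eqn_leq; apply/andP; split.
  by rewrite -{2}(size_takel le_i); apply/dist_leq_walkn/walkn_path.
set x := last s (take i p) in sp2 *.
have sx : connect e s x by apply/connectP; exists (take i p).
have [q [sq qx size_q]] := walkn_exists_path (dist_walkn sx).
have : walkn e s t (size (q ++ drop i p)).
  have -> : t = last s (q ++ drop i p).
    by rewrite last_cat qx /x -last_cat cat_take_drop.
  by apply: walkn_path; rewrite cat_path sq qx.
move/dist_leq_walkn; rewrite -size_p size_cat size_q size_drop; lia.
Qed.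

Lemma dist_pi_index (s t x : V) : connect e s t -> x \in s :: pi s t ->
  dist e s x = index x (s :: pi s t).
Proof.
move=> st xp; rewrite -{1}(nth_index s xp) dist_nth_pi //.
by rewrite -ltnS; move: xp; rewrite -index_mem.
Qed.

Lemma uniq_pi (s t : V) : connect e s t -> uniq (s :: pi s t).
Proof.
move=> st; apply/(uniqP s) => i j; rewrite !inE /= !ltnS => le_i le_j E.
by rewrite -(dist_nth_pi st le_i) E dist_nth_pi.
Qed.

Lemma pi_neq_nil (v w : V) : connect e v w -> v != w -> pi v w != [::].
Proof.
move=> vw; have [_ pw _] := pi_shortest vw.
by apply: contra_neq => pnil; move: pw; rewrite pnil.
Qed.

End ShortestPaths.

Section ConsistentRoutes.
Variables (V : finType) (e : rel V) (pi : V -> V -> seq V).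
Hypotheses (acyclic : dag e) (pi_shortest : tie_breaking e pi)
  (pi_consistent : consistent e pi).

Local Notation route q := (q.1 :: pi q.1 q.2).

Lemma route_index_lt (q q' : V * V) (v w : V) :
  connect e q.1 q.2 -> connect e q'.1 q'.2 -> v != w ->
  v \in route q -> w \in route q -> v \in route q' -> w \in route q' ->
  index v (route q) < index w (route q) -> index v (route q') < index w (route q').
Proof.
move=> conn_q conn_q' vw vq wq vq' wq' lt_vw.
have [qpath _ _] := pi_shortest conn_q; have [q'path _ _] := pi_shortest conn_q'.
rewrite ltnNge; apply: contra vw => le_wv; apply/eqP.
apply: dag_connect_antisym acyclic _ _.
  exact: path_index_connect qpath vq wq (ltnW lt_vw).
exact: path_index_connect q'path wq' vq' le_wv.
Qed.

Lemma route_pred_shared (q q' : V * V) (v w u u' : V) :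
  connect e q.1 q.2 -> connect e q'.1 q'.2 -> v != w ->
  v \in route q -> w \in route q -> v \in route q' -> w \in route q' ->
  index v (route q) < index w (route q) ->
  infix [:: u; w] (route q) -> infix [:: u'; w] (route q') -> u = u'.
Proof.
move=> conn_q conn_q' vw vq wq vq' wq' lt_vw uw uw'.
have lt_vw' := route_index_lt conn_q conn_q' vw vq wq vq' wq' lt_vw.
have [qpath _ _] := pi_shortest conn_q.
have conn_vw := path_index_connect qpath vq wq (ltnW lt_vw).
have [_ pi_vw_w _] := pi_shortest conn_vw.
have [u0 u0w] := infix_last_pair v (pi_neq_nil pi_shortest conn_vw vw).
rewrite pi_vw_w in u0w.
have sub_q : infix (v :: pi v w) (route q).
  by apply: pi_consistent; rewrite ?(dist_pi_index pi_shortest conn_q).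
have sub_q' : infix (v :: pi v w) (route q').
  by apply: pi_consistent; rewrite ?(dist_pi_index pi_shortest conn_q').
have uniq_q := uniq_pi pi_shortest conn_q; have uniq_q' := uniq_pi pi_shortest conn_q'.
rewrite (uniq_infix_pair_pred uniq_q uw (infix_trans u0w sub_q)).
by rewrite (uniq_infix_pair_pred uniq_q' uw' (infix_trans u0w sub_q')).
Qed.

Lemma routes_branching_unique (q q' : V * V) (a b a' b' : V * V) :
  connect e q.1 q.2 -> connect e q'.1 q'.2 ->
  infix [:: a.1; a.2] (route q) -> infix [:: a'.1; a'.2] (route q) ->
  infix [:: b.1; b.2] (route q') -> infix [:: b'.1; b'.2] (route q') ->
  a.2 = b.2 -> a'.2 = b'.2 -> a != b -> a' != b' -> a = a' /\ b = b'.
Proof.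
move=> conn_q conn_q'.
wlog le_head : a b a' b' / index a.2 (route q) <= index a'.2 (route q).
  move=> gen aq a'q bq' b'q' ab a'b' neq_ab neq_a'b'.
  have [le|/ltnW le] := leqP (index a.2 (route q)) (index a'.2 (route q)).
    exact: gen.
  by have [-> ->] := gen a' b' a b le a'q aq b'q' bq' a'b' ab neq_a'b' neq_ab.
move=> aq a'q bq' b'q' ab a'b' neq_ab neq_a'b'.
have uniq_q := uniq_pi pi_shortest conn_q; have uniq_q' := uniq_pi pi_shortest conn_q'.
have [head_eq|head_neq] := eqVneq a.2 a'.2; last first.
  have vq := infix_pair_memr aq; have wq := infix_pair_memr a'q.
  have vq' := infix_pair_memr bq'; have wq' := infix_pair_memr b'q'.
  rewrite -ab in vq' bq'; rewrite -a'b' in wq' b'q'.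
  have lt_head : index a.2 (route q) < index a'.2 (route q).
    rewrite ltn_neqAle le_head andbT; apply: contra_neq head_neq.
    exact: (index_inj a.2 vq wq).
  have := route_pred_shared conn_q conn_q' head_neq vq wq vq' wq' lt_head a'q b'q'.
  by move=> tail_eq; case/eqP: neq_a'b'; apply: injective_projections.
rewrite -head_eq in a'q; rewrite -a'b' -head_eq ab in b'q'.
split; apply: injective_projections => //.
- exact: uniq_infix_pair_pred uniq_q aq a'q.
- exact: uniq_infix_pair_pred uniq_q' bq' b'q'.
- by rewrite -ab head_eq.
Qed.

End ConsistentRoutes.

Section Counting.
Variables (V : finType) (e : rel V) (pi : V -> V -> seq V).
Hypotheses (acyclic : dag e) (pi_shortest : tie_breaking e pi)
  (pi_consistent : consistent e pi).
Variable P : {set V * V}.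
Hypothesis P_connect : forall st, st \in P -> connect e st.1 st.2.

Local Notation route q := (q.1 :: pi q.1 q.2).
Local Notation H := (union_graph pi P).

Definition edge_demand (a : V * V) : V * V :=
  odflt a [pick q in P | a \in walk_edges q.1 (pi q.1 q.2)].

Lemma edge_demandP (a : V * V) :
  a \in H -> edge_demand a \in P /\ infix [:: a.1; a.2] (route (edge_demand a)).
Proof.
rewrite inE => /existsP [q /andP [qP aq]]; rewrite /edge_demand.
case: pickP => [q' /andP [q'P aq']|/(_ q)]; last by rewrite qP aq.
by split => //; apply: infix_of_mem_zip.
Qed.

Lemma edge_demand_neq (a b : V * V) :
  a \in H -> b \in H -> a.2 = b.2 -> a != b -> edge_demand a != edge_demand b.
Proof.
move=> aH bH ab; apply: contra_neq => demand_eq.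
have [qP aq] := edge_demandP aH; have [_ bq] := edge_demandP bH.
rewrite -demand_eq -ab in bq.
apply: injective_projections => //.
exact: uniq_infix_pair_pred (uniq_pi pi_shortest (P_connect qP)) aq bq.
Qed.

Lemma branching_eventsP (B : {set V * V}) : B \in branching_events H ->
  exists a b, [/\ a != b, B = [set a; b], a \in H, b \in H & a.2 = b.2].
Proof.
rewrite inE => /and3P [BH /cards2P [a [b [ab EB]]] heads]; subst B; exists a, b.
split; rewrite // ?(subsetP BH) ?set21 ?set22 //.
by move/forallP: heads => /(_ a); rewrite set21 => /forallP /(_ b); rewrite set22 => /eqP.
Qed.

Lemma edge_demand_branching_unique (a b a' b' : V * V) :
  a \in H -> b \in H -> a' \in H -> b' \in H -> a.2 = b.2 -> a'.2 = b'.2 ->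
  a != b -> a' != b' -> edge_demand a = edge_demand a' ->
  edge_demand b = edge_demand b' -> a = a' /\ b = b'.
Proof.
move=> aH bH a'H b'H ab a'b' neq_ab neq_a'b' Ea Eb.
have [qP aq] := edge_demandP aH; have [q'P bq'] := edge_demandP bH.
have [_ a'q] := edge_demandP a'H; have [_ b'q'] := edge_demandP b'H.
rewrite -Ea in a'q; rewrite -Eb in b'q'.
exact: (routes_branching_unique acyclic pi_shortest pi_consistent
  (P_connect qP) (P_connect q'P) aq a'q bq' b'q' ab a'b' neq_ab neq_a'b').
Qed.

Lemma card_branching_events_union_graph :
  #|branching_events H| <= 'C(#|P|, 2).
Proof.
have image2 (f : V * V -> V * V) a b : f @: [set a; b] = [set f a; f b].
  by rewrite imsetU1 imset_set1.
pose charge (B : {set V * V}) := edge_demand @: B.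
have charge_inj : {in branching_events H &, injective charge}.
  move=> B B' /branching_eventsP [a [b [neq_ab -> aH bH ab]]].
  move=> /branching_eventsP [a' [b' [neq_a'b' -> a'H b'H a'b']]].
  rewrite /charge !image2 => E.
  have neq_dab := edge_demand_neq aH bH ab neq_ab.
  have /set2P da : edge_demand a \in [set edge_demand a'; edge_demand b'].
    by rewrite -E set21.
  have /set2P db : edge_demand b \in [set edge_demand a'; edge_demand b'].
    by rewrite -E set22.
  case: da db => da [] db; rewrite ?da ?db ?eqxx // in neq_dab.
    by have [-> ->] := edge_demand_branching_unique aH bH a'H b'H ab a'b'
      neq_ab neq_a'b' da db.
  have neq_b'a' : b' != a' by rewrite eq_sym.
  have [-> ->] := edge_demand_branching_unique aH bH b'H a'H ab (esym a'b')
    neq_ab neq_b'a' da db.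
  by rewrite setUC.
rewrite -cards_draws -(card_in_imset charge_inj).
apply/subset_leq_card/subsetP => Q /imsetP [B /branching_eventsP].
case=> a [b [neq_ab -> aH bH ab]] ->.
have [aP _] := edge_demandP aH; have [bP _] := edge_demandP bH.
rewrite inE /charge image2 cards2 edge_demand_neq // andbT.
by apply/subsetP => x /set2P [] ->.
Qed.

End Counting.

Theorem mainTheorem5 (V : finType) (e : rel V) (k : nat) (K : {set V})
  (P : {set V * V}) (pi : V -> V -> seq V) :
  dag e -> #|K| = k ->
  P \subset setX K K ->
  (forall st, st \in P -> connect e st.1 st.2) ->
  tie_breaking e pi -> consistent e pi ->
  #|branching_events (union_graph pi P)| <= #|P| * (#|P| - 1) %/ 2.
Proof.
move=> acyclic _ _ P_connect pi_shortest pi_consistent.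
rewrite subn1 divn2 -bin2.
exact: (card_branching_events_union_graph acyclic pi_shortest pi_consistent P_connect).
Qed.
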